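(* Let $(\mathfrak{g},B_1,B_2)$ be a decomposable Rota-Baxter system of Lie algebras and $\phi=B_1+B_2$. Then every element $x\in\phi(\mathfrak{g})$ can be written uniquely as $x=u_++u_-$ with $(u_+,u_-)\in\tilde{\mathfrak{g}}$.
   Context: A Rota-Baxter system of Lie algebras is a triple $(\mathfrak{g},B_1,B_2)$ with $\mathfrak{g}$ a Lie algebra over a field and $B_1,B_2:\mathfrak{g}\to\mathfrak{g}$ linear maps such that for all $u,v\in\mathfrak{g}$: $[B_1(u),B_1(v)]=B_1([B_1(u),B_1(v)]-[B_2(u),B_2(v)])$ and $[B_2(v),B_2(u)]=B_2([B_1(u),B_1(v)]-[B_2(u),B_2(v)])$. It is decomposable if $\operatorname{Ker}(B_1+B_2)\subseteq\operatorname{Ker}(B_1)$. The subspaces $B_1(\operatorname{Ker}B_2)\subseteq B_1(\mathfrak{g})$ and $B_2(\operatorname{Ker}B_1)\subseteq B_2(\mathfrak{g})$ are ideals of these Lie subalgebras, and $\theta:B_1(\mathfrak{g})/B_1(\operatorname{Ker}B_2)\to B_2(\mathfrak{g})/B_2(\operatorname{Ker}B_1)$, $\theta(\overline{B_1(u)})=\overline{B_2(u)}$, is a well-defined linear map. Set $\tilde{\mathfrak{g}}=\{(u_+,u_-)\in B_1(\mathfrak{g})\oplus B_2(\mathfrak{g})\mid\theta(\overline{u_+})=\overline{u_-}\}$. *)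

From HB Require Import structures.
From mathcomp Require Import all_boot all_algebra.
Set Implicit Arguments. Unset Strict Implicit. Unset Printing Implicit Defensive.
Import GRing.Theory.
Local Open Scope ring_scope.

Definition is_lie_bracket (K : fieldType) (V : lmodType K) (br : V -> V -> V) : Prop :=
  [/\ (forall (a : K) (x y z : V), br (a *: x + y) z = a *: br x z + br y z),
      (forall (a : K) (x y z : V), br x (a *: y + z) = a *: br x y + br x z),
      (forall x : V, br x x = 0)
    & (forall x y z : V, br x (br y z) + br y (br z x) + br z (br x y) = 0)].

Definition is_RB_system (K : fieldType) (V : lmodType K) (br : V -> V -> V)
    (B1 B2 : V -> V) : Prop :=
  forall u v : V,
    br (B1 u) (B1 v) = B1 (br (B1 u) (B1 v) - br (B2 u) (B2 v)) /\
    br (B2 v) (B2 u) = B2 (br (B1 u) (B1 v) - br (B2 u) (B2 v)).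

Definition decomposable (K : fieldType) (V : lmodType K) (B1 B2 : V -> V) : Prop :=
  forall u : V, B1 u + B2 u = 0 -> B1 u = 0.

(* Membership in g~ = {(u+, u-) in B1(g) ⊕ B2(g) | theta(bar u+) = bar u-},
   where theta(bar (B1 u)) = bar (B2 u) and the quotients are by
   B1(Ker B2) and B2(Ker B1).  Unfolded: u+ = B1 u for some u, and
   u- - B2 u lies in B2(Ker B1) (u- then automatically lies in B2(g)). *)
Definition in_gtilde (K : fieldType) (V : lmodType K) (B1 B2 : V -> V)
    (p : V * V) : Prop :=
  exists u : V, p.1 = B1 u /\
    exists w : V, B1 w = 0 /\ p.2 - B2 u = B2 w.

(* The pairs in g~ are exactly the pairs (B1 v, B2 v): if p = (B1 v, B2 v + B2 w)
   with B1 w = 0, then p = (B1 (v + w), B2 (v + w)).  Existence is then the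
   pair (B1 u, B2 u), and uniqueness follows because two such pairs with the
   same sum differ by B1 d, B2 d with d in Ker(B1 + B2) ⊆ Ker B1. *)

From HB Require Import structures.
From mathcomp Require Import all_boot all_algebra.
Import GRing.Theory.
Local Open Scope ring_scope.

Section Gtilde.

Variables (K : fieldType) (V : lmodType K) (B1 B2 : {linear V -> V}).

Lemma in_gtildeP (p : V * V) :
  in_gtilde B1 B2 p <-> exists v : V, p = (B1 v, B2 v).
Proof.
split.
- case: p => a b [v [/= -> [w [B1w0 /= Hb]]]].
  exists (v + w); rewrite !linearD /= B1w0 addr0.
  by rewrite -Hb addrC subrK.
- move=> [v ->]; exists v; split=> //; exists 0.
  by split; rewrite ?linear0 ?subrr.
Qed.

Lemma decomposable_pair_inj : decomposable B1 B2 ->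
  forall u v : V, B1 u + B2 u = B1 v + B2 v -> (B1 u, B2 u) = (B1 v, B2 v).
Proof.
move=> decB u v Esum.
have B1E : B1 u = B1 v.
  apply/eqP; rewrite -subr_eq0 -linearB; apply/eqP/decB.
  by rewrite !linearB addrACA -opprD Esum subrr.
by congr pair; apply: (addrI (B1 u)); rewrite {2}B1E.
Qed.

End Gtilde.

Theorem theorem6p6 (K : fieldType) (V : lmodType K) (br : V -> V -> V)
    (B1 B2 : {linear V -> V}) :
  is_lie_bracket br ->
  is_RB_system br B1 B2 ->
  decomposable B1 B2 ->
  forall x : V, (exists u : V, x = B1 u + B2 u) ->
    exists! p : V * V, in_gtilde B1 B2 p /\ x = p.1 + p.2.
Proof.
move=> _ _ decB x [u ->].
exists (B1 u, B2 u); split.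
  by split=> //; apply/in_gtildeP; exists u.
move=> p [/in_gtildeP [v ->] /= Esum].
exact: decomposable_pair_inj.
Qed.
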